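(* Let $n\ge3$, $K,H\le\mathbb{H}^\times$ finite with $[K,K]\le H\trianglelefteq K$, $H\ne\{1\}$ and $K/H$ cyclic. Let $\lambda=(\lambda_1,\dots,\lambda_k)$ be a partition of $n$, $\alpha,\beta\in K$, and $d=\gcd([K:H],\lambda_1,\dots,\lambda_k)$. Then $P_\lambda^\alpha$ and $P_\lambda^\beta$ are conjugate in $G_n(K,H)$ if and only if the order of $\alpha\beta^{-1}H$ in $K/H$ divides $[K:H]/d$.
   Context: $\mathbb{H}$: quaternions. $A_n(K,H)$: diagonal matrices $\mathrm{diag}(k_1,\dots,k_n)$, $k_i\in K$, $k_1\cdots k_n\in H$; $G_n(K,H)$: group generated by $A_n(K,H)$ and the permutation matrices $M(\sigma)$, acting on $\mathbb{H}^n$ by left multiplication. For a partition $\lambda=(\lambda_1,\dots,\lambda_k)$ of $n$ with partial sums $m_i=\lambda_1+\dots+\lambda_i$, $m_0=0$, let $I_i=\{m_{i-1}+1,\dots,m_i\}$; for $\alpha\in K$ let $D_\alpha=\mathrm{diag}(\alpha,1,\dots,1)$. Then $P_\lambda^\alpha=P_1\times\dots\times P_k$ with $P_i=\{D_\alpha M(\sigma)D_\alpha^{-1}:\sigma\in\mathrm{Sym}(I_i)\}$ (the symmetric groups permuting the vectors $\alpha e_1, e_2,\dots,e_{m_1}$, resp. $e_{m_{i-1}+1},\dots,e_{m_i}$). *)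

From HB Require Import structures.
From mathcomp Require Import all_boot all_order all_algebra all_fingroup all_solvable.
From mathcomp Require Import ring.
From mathcomp Require Import reals.

Set Implicit Arguments.
Unset Strict Implicit.
Unset Printing Implicit Defensive.
Import GRing.Theory.
Local Open Scope ring_scope.

Section Quaternions.
Variable R : comNzRingType.

Record quat := Quat { q0 : R; q1 : R; q2 : R; q3 : R }.

Definition quat_to (x : quat) := (q0 x, q1 x, q2 x, q3 x).
Definition quat_of (t : R * R * R * R) := let: (a, b, c, d) := t in Quat a b c d.
Lemma quat_toK : cancel quat_to quat_of. Proof. by case. Qed.

HB.instance Definition _ := Choice.copy quat (can_type quat_toK).

Definition qzero := Quat 0 0 0 0.
Definition qone := Quat 1 0 0 0.
Definition qopp (x : quat) := Quat (- q0 x) (- q1 x) (- q2 x) (- q3 x).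
Definition qadd (x y : quat) :=
  Quat (q0 x + q0 y) (q1 x + q1 y) (q2 x + q2 y) (q3 x + q3 y).
(* Hamilton product: i^2 = j^2 = k^2 = ijk = -1 *)
Definition qmul (x y : quat) :=
  Quat (q0 x * q0 y - q1 x * q1 y - q2 x * q2 y - q3 x * q3 y)
       (q0 x * q1 y + q1 x * q0 y + q2 x * q3 y - q3 x * q2 y)
       (q0 x * q2 y - q1 x * q3 y + q2 x * q0 y + q3 x * q1 y)
       (q0 x * q3 y + q1 x * q2 y - q2 x * q1 y + q3 x * q0 y).

Lemma qaddA : associative qadd.
Proof. by move=> [? ? ? ?] [? ? ? ?] [? ? ? ?]; congr Quat => /=; ring. Qed.
Lemma qaddC : commutative qadd.
Proof. by move=> [? ? ? ?] [? ? ? ?]; congr Quat => /=; ring. Qed.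
Lemma qadd0 : left_id qzero qadd.
Proof. by move=> [? ? ? ?]; congr Quat => /=; ring. Qed.
Lemma qaddN : left_inverse qzero qopp qadd.
Proof. by move=> [? ? ? ?]; congr Quat => /=; ring. Qed.
Lemma qmulA : associative qmul.
Proof. by move=> [? ? ? ?] [? ? ? ?] [? ? ? ?]; congr Quat => /=; ring. Qed.
Lemma qmul1 : left_id qone qmul.
Proof. by move=> [? ? ? ?]; congr Quat => /=; ring. Qed.
Lemma qmulr1 : right_id qone qmul.
Proof. by move=> [? ? ? ?]; congr Quat => /=; ring. Qed.
Lemma qmulDl : left_distributive qmul qadd.
Proof. by move=> [? ? ? ?] [? ? ? ?] [? ? ? ?]; congr Quat => /=; ring. Qed.
Lemma qmulDr : right_distributive qmul qadd.
Proof. by move=> [? ? ? ?] [? ? ? ?] [? ? ? ?]; congr Quat => /=; ring. Qed.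
Lemma qone_neq0 : qone != qzero.
Proof. by apply/eqP => -[] /eqP; rewrite oner_eq0. Qed.

HB.instance Definition _ := GRing.isNzRing.Build quat
  qaddA qaddC qadd0 qaddN qmulA qmul1 qmulr1 qmulDl qmulDr qone_neq0.

End Quaternions.

Definition HH (R : realType) : nzRingType := quat R.

Definition qdiag (R : realType) n (x : 'I_n -> HH R) : 'M[HH R]_n :=
  \matrix_(i, j) (if i == j then x i else 0).

Definition Mperm (R : realType) n (s : 'S_n) : 'M[HH R]_n := perm_mx s.

Inductive gen_group (R : realType) n (S : 'M[HH R]_n -> Prop) : 'M[HH R]_n -> Prop :=
| gen_one : gen_group S 1%:M
| gen_gen A : S A -> gen_group S A
| gen_mul A B : gen_group S A -> gen_group S B -> gen_group S (A *m B)
| gen_inv A B : gen_group S A -> A *m B = 1%:M -> B *m A = 1%:M -> gen_group S B.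

(* Finite subgroups K of HH^x are given as images of a finite group gT under
   an injective group homomorphism f : gT -> HH^x. *)
Definition quat_embedding (R : realType) (gT : finGroupType) (f : gT -> HH R) :=
  [/\ injective f, f 1%g = 1 & forall x y, f (x * y)%g = f x * f y].

Definition A_n (R : realType) (gT : finGroupType) (f : gT -> HH R)
    (K H : {set gT}) n (A : 'M[HH R]_n) : Prop :=
  exists k : 'I_n -> gT,
    [/\ forall i, k i \in K, (\prod_(i < n) k i)%g \in H & A = qdiag (fun i => f (k i))].

Definition G_n (R : realType) (gT : finGroupType) (f : gT -> HH R)
    (K H : {set gT}) n : 'M[HH R]_n -> Prop :=
  gen_group (fun A => A_n f K H A \/ exists s : 'S_n, A = Mperm R s).

Definition is_partition (n : nat) (lam : seq nat) : Prop :=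
  [/\ all (fun l => 0 < l)%N lam, sorted geq lam & sumn lam = n].

(* the block I_i = {m_{i-1}+1, ..., m_i} (1-based); with 0-based indices j : 'I_n
   this is  m_{i-1} <= j < m_i  where m_i = lam_1 + ... + lam_i. *)
Definition in_block (lam : seq nat) (i : nat) (j : nat) : bool :=
  (sumn (take i lam) <= j < sumn (take i.+1 lam))%N.

Definition perm_in_block n (lam : seq nat) (i : nat) (s : 'S_n) : bool :=
  [forall j : 'I_n, ~~ in_block lam i j ==> (s j == j)].

Definition D_ (R : realType) n (a : HH R) : 'M[HH R]_n :=
  qdiag (fun i : 'I_n => if nat_of_ord i == 0%N then a else 1).

Definition P_lam (R : realType) (gT : finGroupType) (f : gT -> HH R)
    n (lam : seq nat) (alpha : gT) : 'M[HH R]_n -> Prop :=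
  fun A => exists s : 'I_(size lam) -> 'S_n,
    (forall i : 'I_(size lam), perm_in_block lam i (s i)) /\
    A = \big[mulmx/1%:M]_(i < size lam)
          (D_ n (f alpha) *m Mperm R (s i) *m D_ n (f (alpha^-1)%g)).

Definition conjugate_in (R : realType) n (G P Q : 'M[HH R]_n -> Prop) : Prop :=
  exists g gi : 'M[HH R]_n,
    [/\ G g, g *m gi = 1%:M, gi *m g = 1%:M &
        forall A, Q A <-> exists B, P B /\ A = g *m B *m gi].

From HB Require Import structures.
From mathcomp Require Import all_boot all_order all_algebra all_fingroup all_solvable.
From mathcomp Require Import reals.
From mathcomp Require Import zify ring.

Set Implicit Arguments.
Unset Strict Implicit.
Unset Printing Implicit Defensive.
Import GRing.Theory.

(* Write [coset H x = gam ^+ e(x)] for a generator [gam] of the cyclic group [K / H] of order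
   [m = #|K : H|]. Every element of [G_n(K,H)] is a monomial matrix [diag(k) M(tau)] whose entries
   satisfy [sum_i e(k_i) = 0 (mod m)].
   If such a [g] conjugates [P^alpha] onto [P^beta], then [w = D_beta^-1 g D_alpha] conjugates every
   transposition inside a block to a permutation matrix, which forces the entries of [w] to be
   constant along each block (up to [tau]). Summing exponents, [e(beta) - e(alpha)] is congruent
   mod [m] to [sum_i lambda_i c_i], hence divisible by [d].
   Conversely, when [d] divides [e(beta) - e(alpha)], Bezout gives [c_i] with
   [sum_i lambda_i c_i = e(alpha) - e(beta) (mod m)]; the diagonal matrix [D_beta w D_alpha^-1] with
   [w] equal to [gam0 ^+ c_i] on the [i]-th block lies in [A_n(K,H)], and since [w] commutes with
   the block permutations it conjugates [P^alpha] onto [P^beta].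
   Finally the order of [alpha beta^-1 H] divides [m / d] iff [d] divides [e(beta) - e(alpha)]. *)

Section MonomialMatrices.
Variables (R : pzRingType) (n : nat).
Local Open Scope ring_scope.

Definition monomx (x : 'I_n -> R) (s : 'S_n) : 'M[R]_n :=
  \matrix_(i, j) (if s i == j then x i else 0).

Lemma monomxM x y s t :
  monomx x s *m monomx y t = monomx (fun i => x i * y (s i)) (s * t)%g.
Proof.
apply/matrixP=> i j; rewrite !mxE (bigD1 (s i)) //= big1 => [|k /negbTE kn].
  by rewrite !mxE eqxx permM; case: eqP => _; rewrite ?mulr0 addr0.
by rewrite !mxE eq_sym kn mul0r.
Qed.

Lemma eq_monomx x y s : x =1 y -> monomx x s = monomx y s.
Proof. by move=> xy; apply/matrixP=> i j; rewrite !mxE xy. Qed.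

Lemma monomx_inj x y s t : (forall i, x i != 0) -> monomx x s = monomx y t ->
  s = t /\ x =1 y.
Proof.
move=> x_neq0 /matrixP xsyt.
have st i : s i = t i.
  have := xsyt i (s i); rewrite !mxE eqxx.
  by case: eqP => // _ xi0; move: (x_neq0 i); rewrite xi0 eqxx.
split; first by apply/permP.
by move=> i; have := xsyt i (s i); rewrite !mxE eqxx st eqxx.
Qed.

Lemma perm_monomx s : perm_mx s = monomx (fun=> 1) s.
Proof. by apply/matrixP=> i j; rewrite !mxE; case: eqP. Qed.

Lemma mulmx_inv_uniq (A B C : 'M[R]_n) : B *m A = 1%:M -> A *m C = 1%:M -> B = C.
Proof. by move=> BA1 AC1; rewrite -[B]mulmx1 -AC1 mulmxA BA1 mul1mx. Qed.

Lemma big_mulmx_conj N (D D' : 'M[R]_n) (X : 'I_N -> 'M[R]_n) :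
  D *m D' = 1%:M -> D' *m D = 1%:M ->
  \big[mulmx/1%:M]_(i < N) (D *m X i *m D') = D *m (\big[mulmx/1%:M]_(i < N) X i) *m D'.
Proof.
move=> DD' D'D; elim: N X => [|N IHN] X; first by rewrite !big_ord0 mulmx1.
by rewrite !big_ord_recl /= IHN !mulmxA -(mulmxA _ D' D) D'D mulmx1.
Qed.

Lemma big_perm_mx N (s : 'I_N -> 'S_n) :
  \big[mulmx/1%:M]_(i < N) perm_mx (s i) = perm_mx (\prod_(i < N) s i)%g :> 'M[R]_n.
Proof.
elim: N s => [|N IHN] s; first by rewrite !big_ord0 perm_mx1.
by rewrite !big_ord_recl /= IHN perm_mxM.
Qed.

End MonomialMatrices.

Lemma qdiag_monomx (R : realType) n (x : 'I_n -> HH R) : qdiag x = monomx x 1%g.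
Proof. by apply/matrixP=> i j; rewrite !mxE perm1. Qed.

Fixpoint block_index (lam : seq nat) (l : nat) : nat :=
  if lam is a :: r then (if l < a then 0 else (block_index r (l - a)).+1) else 0.

Lemma in_block0 a r l : in_block (a :: r) 0 l = (l < a).
Proof. rewrite /in_block /= take0 /=; lia. Qed.

Lemma in_blockS a r i l : in_block (a :: r) i.+1 l = (a <= l) && in_block r i (l - a).
Proof. rewrite /in_block /=; lia. Qed.

Lemma block_index_in lam i l : in_block lam i l -> block_index lam l = i.
Proof.
elim: lam i l => [|a r IHr] i l; first by rewrite /in_block /=; lia.
case: i => [|i]; first by rewrite in_block0 /= => ->.
by rewrite in_blockS /= => /andP[al /IHr ->]; rewrite ltnNge al.
Qed.

Lemma in_block_index lam l : l < sumn lam -> in_block lam (block_index lam l) l.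
Proof.
elim: lam l => [|a r IHr] l //= lt_l.
case: ifP => al; first by rewrite in_block0.
by rewrite in_blockS IHr ?andbT; lia.
Qed.

Lemma in_block_size lam i l : in_block lam i l -> i < size lam.
Proof.
elim: lam i l => [|a r IHr] i l; first by rewrite /in_block /=; lia.
by case: i => [|i] //; rewrite in_blockS => /andP[_ /IHr].
Qed.

Lemma sum_block_index lam (F : nat -> nat) :
  \sum_(0 <= l < sumn lam) F (block_index lam l) = \sum_(0 <= i < size lam) nth 0 lam i * F i.
Proof.
elim: lam F => [|a r IHr] F; first by rewrite !big_geq.
rewrite /= (big_cat_nat _ (n := a)) //=; last lia.
rewrite big_nat_recl // -IHr.
rewrite (eq_big_nat _ _ (F2 := fun _ => F 0)); last by move=> l /andP[_ ->].
rewrite sum_nat_const_nat subn0; congr addn.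
rewrite -{1}(add0n a) big_addn addnC addnK; apply: eq_big_nat => l _.
by rewrite ltnNge leq_addl /= addnK.
Qed.

Lemma block_index_perm n lam i (s : 'S_n) (j : 'I_n) :
  perm_in_block lam i s -> block_index lam (s j) = block_index lam j.
Proof.
move=> /forallP s_i.
have [ij|] := boolP (in_block lam i j); last by move=> /negbTE nij; move: (s_i j); rewrite nij => /eqP ->.
have isj : in_block lam i (s j).
  apply: contraT => nisj; move: (s_i (s j)); rewrite nisj => /eqP /perm_inj sjj.
  by move: nisj; rewrite sjj ij.
by rewrite (block_index_in ij) (block_index_in isj).
Qed.

Lemma foldr_gcdn_dvd_init m lam : foldr gcdn m lam %| m.
Proof. by elim: lam => //= a r; apply: dvdn_trans; apply: dvdn_gcdr. Qed.

Lemma foldr_gcdn_dvd_nth m lam i : foldr gcdn m lam %| nth 0 lam i.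
Proof.
elim: lam i => [|a r IHr] [|i] //=; first exact: dvdn_gcdl.
by apply: dvdn_trans (IHr i); apply: dvdn_gcdr.
Qed.

Lemma foldr_gcdn_combination m lam s : 0 < m -> all (fun l => 0 < l) lam ->
  foldr gcdn m lam %| s ->
  exists e : nat -> nat, \sum_(0 <= i < size lam) nth 0 lam i * e i = s %[mod m].
Proof.
move=> m_gt0; elim: lam s => [|a r IHr] s /=.
  by move=> _ /eqP ms; exists (fun=> 0); rewrite big_geq // mod0n ms.
move=> /andP[a_gt0 r_gt0]; set g := foldr gcdn m r => /dvdnP[q ->].
have [b _ /dvdnP[c ac]] := Bezoutl g a_gt0.
have [w mw] : exists w, m = g * w.+1.
  have /dvdnP[w mw] := foldr_gcdn_dvd_init m r.
  by case: w mw m_gt0 => [->|w ->]; [|exists w; rewrite mulnC].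
have [e re] := IHr (g * (b * q * w)) r_gt0 (dvdn_mulr _ (dvdnn _)).
exists (fun i => if i is i'.+1 then e i' else c * q).
rewrite big_nat_recl //= -modnDmr re modnDmr.
have -> : a * (c * q) + g * (b * q * w) = q * gcdn a g + b * q * m.
  by rewrite mw mulnA [a * c]mulnC -ac; move: (gcdn a g) => G; ring.
by rewrite addnC modnMDl.
Qed.

Lemma sum_ord_block_index n lam (F : nat -> nat) : sumn lam = n ->
  \sum_(j < n) F (block_index lam j) = \sum_(0 <= i < size lam) nth 0 lam i * F i.
Proof. by move=> <-; rewrite -(big_mkord xpredT (F \o block_index lam)) sum_block_index. Qed.

Lemma sum_block_const_dvd m n lam (U : 'I_n -> nat) : sumn lam = n ->
  (forall i (j j' : 'I_n), in_block lam i j -> in_block lam i j' -> U j = U j') ->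
  foldr gcdn m lam %| \sum_(j < n) U j.
Proof.
case: n U => [|n] U sum_lam U_const; first by rewrite big_ord0 dvdn0.
pose F i := U (inord (sumn (take i lam))).
have -> : \sum_(j < n.+1) U j = \sum_(j < n.+1) F (block_index lam j).
  apply: eq_bigr => j _; set i := block_index lam j.
  have ij : in_block lam i j by apply: in_block_index; rewrite sum_lam.
  apply: (U_const _ _ _ ij); move: ij; rewrite /in_block => /andP[le_j lt_j].
  by rewrite inordK ?leqnn ?(leq_ltn_trans le_j) //= (leq_ltn_trans le_j).
rewrite sum_ord_block_index //.
by apply: dvdn_sum => i _; apply: dvdn_mulr; apply: foldr_gcdn_dvd_nth.
Qed.

Lemma sum_eq_mod m N (F G : 'I_N -> nat) : (forall i, F i = G i %[mod m]) ->
  \sum_(i < N) F i = \sum_(i < N) G i %[mod m].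
Proof.
move=> FG; rewrite -[LHS]modn_summ -[RHS]modn_summ.
by congr (_ %% _); apply: eq_bigr => i _; apply: FG.
Qed.

Lemma sum_comp_perm n (F : 'I_n -> nat) (s : 'S_n) : \sum_(i < n) F (s i) = \sum_(i < n) F i.
Proof. by rewrite [RHS](reindex_inj (@perm_inj _ s)). Qed.

Lemma dvdn_eq_mod m a b : a = b %[mod m] -> (m %| a) = (m %| b).
Proof. by move=> ab; rewrite /dvdn ab. Qed.

Lemma order_expg_dvd_div (gT : finGroupType) (g : gT) d e : d %| #[g]%g ->
  (#[g ^+ e]%g %| #[g]%g %/ d) = (d %| e).
Proof.
case/dvdnP=> q gq; have := order_gt0 g; rewrite gq muln_gt0 => /andP[q_gt0 d_gt0].
by rewrite order_dvdn -expgM -order_dvdn gq mulnK // (mulnC e) dvdn_pmul2l.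
Qed.

Section CyclicQuotientExponent.
Local Open Scope group_scope.
Variables (gT : finGroupType) (K H : {group gT}) (gam : coset_of H).
Hypotheses (nHK : K \subset 'N(H)) (Kgam : K / H = <[gam]>).
Local Notation m := #[gam].

Lemma logc_subproof x : exists e, (x \in K) ==> (coset H x == gam ^+ e).
Proof.
have [xK|] := boolP (x \in K); last by exists 0.
have : coset H x \in <[gam]> by rewrite -Kgam mem_quotient.
by case/cycleP=> e ->; exists e; rewrite eqxx.
Qed.

(* The least [e] with [coset H x = gam ^+ e]; junk value [0] outside [K]. *)
Definition logc x := ex_minn (logc_subproof x).

Lemma logcP x : x \in K -> coset H x = gam ^+ logc x.
Proof. by rewrite /logc; case: ex_minnP => e /implyP xe _ /xe /eqP. Qed.

Lemma logc1 : logc 1 = 0.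
Proof.
rewrite /logc; case: ex_minnP => e _ /(_ 0); rewrite expg0 morph1 eqxx implybT.
by move=> /(_ isT); rewrite leqn0 => /eqP.
Qed.

Lemma logcM x y : x \in K -> y \in K -> logc (x * y) = logc x + logc y %[mod m].
Proof.
move=> xK yK; apply/eqP; rewrite -eq_expg_mod_order expgD -!logcP ?groupM //.
by rewrite morphM // (subsetP nHK).
Qed.

Lemma logcV x : x \in K -> logc x^-1 + logc x = 0 %[mod m].
Proof. by move=> xK; rewrite -logcM ?groupV // mulVg logc1. Qed.

Lemma logcX x e : x \in K -> coset H x = gam -> logc (x ^+ e) = e %[mod m].
Proof.
move=> xK xgam; apply/eqP; rewrite -eq_expg_mod_order -logcP ?groupX //.
by rewrite morphX ?(subsetP nHK) //; change (coset H x ^+ e == gam ^+ e); rewrite xgam.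
Qed.

Lemma mem_prod_logc N (k : 'I_N -> gT) : (forall i, k i \in K) ->
  (\prod_(i < N) k i \in H) = (m %| \sum_(i < N) logc (k i))%N.
Proof.
move=> kK; have prodK : \prod_(i < N) k i \in K by apply: group_prod.
rewrite order_dvdn; have -> : gam ^+ (\sum_(i < N) logc (k i)) = coset H (\prod_(i < N) k i).
  rewrite morph_prod => [|i _]; last exact: (subsetP nHK).
  by rewrite (big_morph _ (expgD gam) (expg0 gam)); apply: eq_bigr => i _; rewrite -logcP.
apply/idP/eqP; first exact: coset_id.
by apply: coset_idr; apply: (subsetP nHK).
Qed.

End CyclicQuotientExponent.

Section EmbeddedMonomials.
Variables (R : realType) (gT : finGroupType) (f : gT -> HH R).
Hypothesis emb : quat_embedding f.
Variable n : nat.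
Local Open Scope ring_scope.

Lemma quat_embM x y : f (x * y)%g = f x * f y. Proof. by case: emb. Qed.
Lemma quat_emb1 : f 1%g = 1. Proof. by case: emb. Qed.

Lemma quat_emb_neq0 x : f x != 0.
Proof.
apply/eqP=> fx0; have := quat_emb1; rewrite -(mulgV x) quat_embM fx0 mul0r => /eqP.
by rewrite eq_sym oner_eq0.
Qed.

Definition gmx (k : 'I_n -> gT) (s : 'S_n) := monomx (fun i => f (k i)) s.

Lemma gmxM k l s t : gmx k s *m gmx l t = gmx (fun i => k i * l (s i))%g (s * t)%g.
Proof. by rewrite /gmx monomxM; apply: eq_monomx => i; rewrite quat_embM. Qed.

Lemma gmx_inj k l s t : gmx k s = gmx l t -> s = t /\ k =1 l.
Proof.
case/monomx_inj=> [i|-> kl]; first exact: quat_emb_neq0.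
by split=> // i; case: emb => f_inj _ _; apply: f_inj.
Qed.

Lemma eq_gmx k l s t : k =1 l -> s = t -> gmx k s = gmx l t.
Proof. by move=> kl ->; apply: eq_monomx => i; rewrite kl. Qed.

Lemma perm_gmx s : Mperm R s = gmx (fun=> 1%g) s.
Proof. by rewrite /Mperm perm_monomx /gmx quat_emb1. Qed.

Lemma gmx1 : gmx (fun=> 1%g) 1%g = 1%:M.
Proof. by rewrite -perm_gmx /Mperm perm_mx1. Qed.

Lemma qdiag_gmx k : qdiag (fun i => f (k i)) = gmx k 1%g.
Proof. exact: qdiag_monomx. Qed.

Definition gmxV (k : 'I_n -> gT) (s : 'S_n) := gmx (fun i => (k ((s^-1)%g i))^-1)%g (s^-1)%g.

Lemma gmxKV k s : gmx k s *m gmxV k s = 1%:M.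
Proof. by rewrite gmxM -gmx1; apply: eq_gmx => [i|]; rewrite ?permK mulgV. Qed.

Lemma gmxVK k s : gmxV k s *m gmx k s = 1%:M.
Proof. by rewrite gmxM -gmx1; apply: eq_gmx => [i|]; rewrite ?permK mulVg. Qed.

Definition dvec (a : gT) (i : 'I_n) : gT := if nat_of_ord i == 0%N then a else 1%g.

Lemma dvecV a i : dvec a^-1 i = (dvec a i)^-1%g.
Proof. by rewrite /dvec; case: eqP; rewrite ?invg1. Qed.

Lemma D_gmx a : D_ n (f a) = gmx (dvec a) 1%g.
Proof.
by rewrite /D_ qdiag_monomx; apply: eq_monomx => i; rewrite /dvec; case: eqP; rewrite ?quat_emb1.
Qed.

Definition twist_perm (a : gT) (s : 'S_n) := D_ n (f a) *m Mperm R s *m D_ n (f a^-1%g).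

Lemma twist_perm_gmx a s :
  twist_perm a s = gmx (fun i => dvec a i * (dvec a (s i))^-1)%g s.
Proof.
rewrite /twist_perm !D_gmx perm_gmx !gmxM.
by apply: eq_gmx => [i|]; rewrite ?mul1g ?mulg1 // dvecV.
Qed.

Lemma D_mulV a : D_ n (f a) *m D_ n (f a^-1%g) = 1%:M.
Proof. by rewrite !D_gmx gmxM -gmx1; apply: eq_gmx => [i|]; rewrite ?perm1 ?dvecV ?mulgV ?mulg1. Qed.

Lemma D_Vmul a : D_ n (f a^-1%g) *m D_ n (f a) = 1%:M.
Proof. by rewrite -{2}(invgK a) D_mulV. Qed.

End EmbeddedMonomials.

Section GeneratedGroupMonomial.
Variables (R : realType) (gT : finGroupType) (f : gT -> HH R).
Hypothesis emb : quat_embedding f.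
Variables (K H : {group gT}) (gam : coset_of H).
Hypotheses (nHK : (K \subset 'N(H))%g) (Kgam : (K / H)%g = <[gam]>%g).
Variable n : nat.
Local Notation logc := (logc Kgam).

Lemma G_n_gmx g : G_n f K H g -> exists k s,
  [/\ forall i, k i \in K, (#[gam]%g %| \sum_(i < n) logc (k i))%N & g = gmx f k s].
Proof.
have sum_logc1 : (#[gam]%g %| \sum_(i < n) logc 1%g)%N by rewrite big1 ?dvdn0 // => i _; apply: logc1.
elim=> {g} [|A [[k [kK kH ->]] | [s ->]] | A B _ [k [s [kK km ->]]] _ [l [t [lK lm ->]]]
           | A B _ [k [s [kK km ->]]] AB1 BA1].
- by exists (fun=> 1%g), 1%g; split; rewrite ?(gmx1 emb).
- by exists k, 1%g; split; rewrite -?(mem_prod_logc nHK) ?qdiag_gmx.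
- by exists (fun=> 1%g), s; split; rewrite ?(perm_gmx emb).
- exists (fun i => k i * l (s i))%g, (s * t)%g; split; rewrite ?(gmxM emb) //.
  + by move=> i; rewrite groupM.
  rewrite (dvdn_eq_mod (sum_eq_mod (fun i => logcM nHK Kgam (kK i) (lK (s i))))).
  by rewrite big_split /= (sum_comp_perm (fun i => logc (l i))) dvdn_add.
- rewrite (mulmx_inv_uniq BA1 (gmxKV emb k s)).
  exists (fun i => (k ((s^-1)%g i))^-1)%g, (s^-1)%g; split=> //.
    by move=> i; rewrite groupV.
  rewrite (sum_comp_perm (fun i => logc (k i)^-1%g)).
  have := dvdn_eq_mod (sum_eq_mod (fun i => logcV nHK Kgam (kK i))).
  by rewrite big_split /= big1_eq dvdn0 dvdn_addl.
Qed.

End GeneratedGroupMonomial.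

Section BlockGroupConjugacy.
Variables (R : realType) (gT : finGroupType) (f : gT -> HH R).
Hypothesis emb : quat_embedding f.
Variables (K H : {group gT}) (gam : coset_of H).
Hypotheses (nHK : (K \subset 'N(H))%g) (Kgam : (K / H)%g = <[gam]>%g).
Variables (n : nat) (lam : seq nat).
Hypotheses (n_gt0 : (0 < n)%N) (sum_lam : sumn lam = n).
Variables (alpha beta : gT).
Hypotheses (alphaK : alpha \in K) (betaK : beta \in K).
Local Open Scope ring_scope.
Local Notation logc := (logc Kgam).
Local Notation m := #[gam]%g.

Lemma sum_dvec (F : gT -> nat) a : F 1%g = 0%N -> (\sum_(i < n) F (dvec a i))%N = F a.
Proof. by case: n n_gt0 => // n' _ F1; rewrite big_ord_recl big1 ?addn0. Qed.

Lemma mem_dvec (G : {group gT}) a (i : 'I_n) : a \in G -> dvec a i \in G.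
Proof. by rewrite /dvec; case: eqP. Qed.

Lemma P_lam_twist a (A : 'M[HH R]_n) : P_lam f lam a A -> exists rho, A = twist_perm f a rho.
Proof.
case=> s [_ ->]; exists (\prod_(i < size lam) s i)%g.
rewrite big_mulmx_conj; [|exact: D_mulV|exact: D_Vmul].
by rewrite /Mperm big_perm_mx.
Qed.

Lemma P_lam_tperm a (i : 'I_(size lam)) (j j' : 'I_n) :
  in_block lam i j -> in_block lam i j' -> P_lam f lam a (twist_perm f a (tperm j j')).
Proof.
move=> ij ij'; exists (fun i' => if i' == i then tperm j j' else 1%g); split.
  move=> i'; apply/forallP => l; apply/implyP.
  have [-> il|_ _] := eqVneq i' i; last by rewrite perm1.
  by rewrite tpermD //; apply: contraNneq il => <-.
rewrite big_mulmx_conj; [|exact: D_mulV|exact: D_Vmul].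
by rewrite /Mperm big_perm_mx -big_mkcond big_pred1_eq.
Qed.

Lemma P_lam_conj (g gi : 'M[HH R]_n) : g *m gi = 1%:M -> gi *m g = 1%:M ->
  (forall i s, perm_in_block lam i s -> g *m twist_perm f alpha s *m gi = twist_perm f beta s) ->
  forall A : 'M[HH R]_n, P_lam f lam beta A <-> exists B, P_lam f lam alpha B /\ A = g *m B *m gi.
Proof.
move=> ggi gig conj_twist A; split.
- case=> s [s_block ->]; exists (\big[mulmx/1%:M]_(i < size lam) twist_perm f alpha (s i)).
  split; first by exists s.
  rewrite -[RHS](big_mulmx_conj _ ggi gig); apply: eq_bigr => i _.
  exact: (esym (conj_twist _ _ (s_block i))).
- case=> _ [[s [s_block ->]] ->]; exists s; split=> //.
  rewrite -[LHS](big_mulmx_conj _ ggi gig); apply: eq_bigr => i _.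
  exact: conj_twist _ _ (s_block i).
Qed.

(* [gmx f (twist_entries w tau) tau = D_beta *m gmx f w tau *m D_alpha^-1]. *)
Definition twist_entries (w : 'I_n -> gT) (tau : 'S_n) i :=
  (dvec beta i * w i * (dvec alpha (tau i))^-1)%g.

Lemma sum_logc_twist_entries w tau : (forall i, w i \in K) ->
  (\sum_(i < n) logc (twist_entries w tau i) =
     logc beta + \sum_(i < n) logc (w i) + logc alpha^-1%g %[mod m])%N.
Proof.
move=> wK; rewrite (sum_eq_mod (G := fun i =>
  logc (dvec beta i) + logc (w i) + logc (dvec alpha (tau i))^-1%g))%N; last first.
  move=> i; rewrite logcM ?groupM ?groupV ?mem_dvec //.
  by rewrite -modnDml logcM ?mem_dvec // modnDml.
rewrite !big_split /= (sum_dvec (F := logc)) ?logc1 //.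
rewrite (sum_comp_perm (fun i => logc (dvec alpha i)^-1%g)).
by rewrite (sum_dvec (F := fun x => logc x^-1%g)) //= invg1 logc1.
Qed.

Definition untwist_entries (k : 'I_n -> gT) (tau : 'S_n) i :=
  ((dvec beta i)^-1 * k i * dvec alpha (tau i))%g.

Lemma twist_untwist_entries k tau : twist_entries (untwist_entries k tau) tau =1 k.
Proof. by move=> i; rewrite /twist_entries /untwist_entries !mulgA mulgV mul1g mulgK. Qed.

(* The conjugate of [twist_perm f alpha (tperm j j')] must be a [twist_perm f beta rho]; comparing
   the entries in row [tau^-1 j] relates rows [tau^-1 j] and [tau^-1 j'] of the untwisted matrix. *)
Lemma untwist_entries_block k tau i (j j' : 'I_n) :
  (forall B, P_lam f lam alpha B -> P_lam f lam beta (gmx f k tau *m B *m gmxV f k tau)) ->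
  in_block lam i j -> in_block lam i j' ->
  untwist_entries k tau ((tau^-1)%g j) = untwist_entries k tau ((tau^-1)%g j').
Proof.
move=> conjP ij ij'.
have [rho] := P_lam_twist (conjP _ (@P_lam_tperm alpha (Ordinal (in_block_size ij)) j j' ij ij')).
rewrite !(twist_perm_gmx emb) /gmxV !(gmxM emb) => /(gmx_inj emb)[tau_rho entries].
have := entries ((tau^-1)%g j); have := congr1 (fun r : 'S_n => r ((tau^-1)%g j)) tau_rho.
rewrite /= !permM permKV tpermL => <-; rewrite /untwist_entries !permKV.
set x := k _; set y := k _; set b := dvec beta _; set b' := dvec beta _.
move/(congr1 (fun z => b^-1 * z * y * dvec alpha j')%g).
by rewrite !mulgA mulgKV mulgKV mulVg mul1g.
Qed.

Lemma conj_P_lam_dvd :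
  conjugate_in (G_n f K H (n:=n)) (P_lam f lam alpha) (P_lam f lam beta) ->
  (foldr gcdn m lam %| logc beta + logc alpha^-1%g)%N.
Proof.
case=> g [gi [Gg ggi gig conjP]].
have [k [tau [kK m_sum_k g_eq]]] := G_n_gmx emb nHK Kgam Gg.
rewrite g_eq in gig; rewrite g_eq (mulmx_inv_uniq gig (gmxKV emb k tau)) in conjP.
set w := untwist_entries k tau.
have wK i : w i \in K by rewrite !groupM ?groupV ?mem_dvec.
have d_sum_w : (foldr gcdn m lam %| \sum_(i < n) logc (w i))%N.
  rewrite -(sum_comp_perm _ (tau^-1)%g); apply: sum_block_const_dvd sum_lam _ => i j j' ij ij'.
  by apply: congr1; apply: (untwist_entries_block _ ij ij') => B PB; apply/conjP; exists B.
have : (m %| logc beta + \sum_(i < n) logc (w i) + logc alpha^-1%g)%N.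
  rewrite -(dvdn_eq_mod (sum_logc_twist_entries tau wK)).
  by rewrite (eq_bigr _ (fun i _ => congr1 logc (twist_untwist_entries k tau i))).
move=> /(dvdn_trans (foldr_gcdn_dvd_init m lam)).
by rewrite addnAC dvdn_addl.
Qed.

Lemma twist_entries_conj (c : 'I_n -> gT) (s : 'S_n) : (forall j, c (s j) = c j) ->
  gmx f (twist_entries c 1) 1 *m twist_perm f alpha s *m gmxV f (twist_entries c 1) 1 =
  twist_perm f beta s.
Proof.
move=> cs; rewrite !(twist_perm_gmx emb) /gmxV !(gmxM emb).
apply: eq_gmx => [j|]; last by rewrite invg1 mul1g mulg1.
rewrite /twist_entries invg1 !perm1 mul1g cs.
by rewrite !invMg !invgK !mulgA !mulgKV mulgK.
Qed.

Lemma dvd_conj_P_lam : all (fun l => 0 < l)%N lam ->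
  (foldr gcdn m lam %| logc beta + logc alpha^-1%g)%N ->
  conjugate_in (G_n f K H (n:=n)) (P_lam f lam alpha) (P_lam f lam beta).
Proof.
move=> lam_gt0 d_dvd; set t := (logc beta + logc alpha^-1%g)%N in d_dvd *.
have [e sum_e] := foldr_gcdn_combination (order_gt0 gam) lam_gt0 (dvdn_mulr m.-1 d_dvd).
have [g0 g0K g0gam] : exists2 g0, g0 \in K & coset H g0 = gam.
  have : gam \in (K / H)%g by rewrite Kgam cycle_id.
  by case/morphimP => x _ xK ->; exists x.
pose c j := (g0 ^+ e (block_index lam j))%g.
have cK j : c j \in K by rewrite groupX.
pose k := twist_entries c 1.
have kK j : k j \in K by rewrite !groupM ?groupV ?mem_dvec.
exists (gmx f k 1), (gmxV f k 1); split; [|exact: gmxKV|exact: gmxVK|].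
- apply: gen_gen; left; exists k; split; rewrite ?qdiag_gmx //.
  rewrite (mem_prod_logc nHK Kgam kK) (dvdn_eq_mod (sum_logc_twist_entries 1 cK)).
  have sum_c : (\sum_(j < n) logc (c j) = t * m.-1 %[mod m])%N.
    by rewrite (sum_eq_mod (fun j => logcX nHK Kgam _ g0K g0gam)) sum_ord_block_index.
  rewrite /dvdn addnAC -modnDmr sum_c modnDmr addnC -mulnSr prednK ?order_gt0 //.
  by rewrite modnMl.
- apply: P_lam_conj; [exact: gmxKV|exact: gmxVK|] => i s s_block.
  by apply: twist_entries_conj => j; rewrite /c (block_index_perm j s_block).
Qed.

End BlockGroupConjugacy.

Unset Implicit Arguments.

Theorem proposition4p8 (R : realType) (gT : finGroupType) (f : gT -> HH R)
    (K H : {group gT}) (n : nat) (lam : seq nat) (alpha beta : gT) :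
  quat_embedding f ->
  (3 <= n)%N ->
  ([~: K, K] \subset H)%g -> (H <| K)%g -> H != 1%g :> {set gT} ->
  cyclic (K / H)%g ->
  is_partition n lam ->
  alpha \in K -> beta \in K ->
  let d := foldr gcdn #|K : H|%g lam in
  conjugate_in (G_n f K H (n:=n)) (P_lam f lam alpha) (P_lam f lam beta) <->
  (#[coset H (alpha * beta^-1)%g]%g %| #|K : H|%g %/ d)%N.
Proof.
move=> emb n_ge3 _ /normal_norm nHK _ /cyclicP[gam Kgam] [lam_gt0 _ sum_lam] alphaK betaK d; rewrite {}/d.
have n_gt0 : (0 < n)%N by apply: leq_trans n_ge3.
have -> : #|K : H|%g = #[gam]%g by rewrite -card_quotient // Kgam.
have nH x : x \in K -> x \in 'N(H)%g by apply: (subsetP nHK).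
have -> : coset H (alpha * beta^-1)%g = (gam ^+ (logc Kgam beta + logc Kgam alpha^-1))^-1%g.
  rewrite expgD -!logcP ?groupV // -!morphM ?groupV ?nH // -morphV ?groupM ?groupV ?nH //.
  by rewrite invMg invgK.
rewrite orderV order_expg_dvd_div ?foldr_gcdn_dvd_init //.
by split; [apply: conj_P_lam_dvd | apply: dvd_conj_P_lam].
Qed.
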